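(* Let $(\alpha,\beta)\in\Delta_K$ and let $\varepsilon_n=\varepsilon(T^n(\alpha,\beta))$, $n\ge0$. Suppose that the sequence $\{\varepsilon_n\}_{n\ge0}$ is purely periodic with period length $l$. Then the matrix $M_{\varepsilon_0}M_{\varepsilon_1}\cdots M_{\varepsilon_{l-1}}$ is primitive, i.e. some positive power of it has all entries strictly positive.
   Context: Let $K\subset\mathbb{R}$ be a real cubic number field, $N=N_{K/\mathbb{Q}}$ its norm. Fix $r=p/q$ with $p,q$ positive coprime integers and $3\nmid p$. Let $\Delta_K=\{(\alpha,\beta)\in K^2:\ 1,\alpha,\beta \text{ linearly independent over }\mathbb{Q},\ \alpha,\beta>0,\ \alpha+\beta<1\}$ and $Ind=\{(i,j): i,j\in\{0,1,2\},\ i\neq j\}$. Let $\Delta=\{(x,y)\in\mathbb{R}^2: x,y\ge 0,\ x+y\le 1\}$ and $\triangle(1,2)=\{(x,y)\in\Delta: x\ge y\}$, $\triangle(2,1)=\{x\le y\}$, $\triangle(0,1)=\{2x+y-1\le 0\}$, $\triangle(1,0)=\{2x+y-1\ge 0\}$, $\triangle(0,2)=\{x+2y-1\le0\}$, $\triangle(2,0)=\{x+2y-1\ge 0\}$ (all subsets of $\Delta$). Maps $T_{(i,j)}:\triangle(i,j)\to\Delta$: $T_{(1,2)}(x,y)=(\frac{x-y}{1-y},\frac{y}{1-y})$, $T_{(2,1)}(x,y)=(\frac{x}{1-x},\frac{y-x}{1-x})$, $T_{(0,1)}(x,y)=(\frac{x}{1-x},\frac{y}{1-x})$, $T_{(1,0)}(x,y)=(\frac{2x+y-1}{x+y},\frac{y}{x+y})$,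 $T_{(0,2)}(x,y)=(\frac{x}{1-y},\frac{y}{1-y})$, $T_{(2,0)}(x,y)=(\frac{x}{x+y},\frac{x+2y-1}{x+y})$. For $(\alpha,\beta)\in\Delta_K$ put $\gamma=1-\alpha-\beta$ and $v_{\{1,2\}}=\frac{\alpha^r\beta^r}{|N(\alpha)N(\beta)|}$, $v_{\{0,1\}}=\frac{\alpha^r\gamma^r}{|N(\alpha)N(\gamma)|}$, $v_{\{0,2\}}=\frac{\beta^r\gamma^r}{|N(\beta)N(\gamma)|}$; the maximum is attained at a unique pair $\{i_0,j_0\}$. $\varepsilon(\alpha,\beta)$ is the ordered pair $(i,j)\in Ind$ with $\{i,j\}=\{i_0,j_0\}$ and $(\alpha,\beta)\in\triangle(i,j)$, and $T(\alpha,\beta)=T_{\varepsilon(\alpha,\beta)}(\alpha,\beta)$ (a map $\Delta_K\to\Delta_K$). For $(i,j)\in Ind$, $M_{(i,j)}=(m_{k\ell})_{0\le k,\ell\le2}$ with $m_{k\ell}=1$ if $k=\ell$ or $(k,\ell)=(i,j)$, and $0$ otherwise. *)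

From HB Require Import structures.
From mathcomp Require Import all_boot all_order all_algebra all_field.
From mathcomp Require Import all_classical all_reals all_analysis.
Set Implicit Arguments. Unset Strict Implicit. Unset Printing Implicit Defensive.
Import Order.TTheory GRing.Theory Num.Theory.
Local Open Scope ring_scope.

Section Defs.
Variables (K : fieldExtType rat) (R : realType) (sigma : {rmorphism K -> R}).

Definition normK (x : K) : rat :=
  \det (passmx.mxof (vbasis fullv) (vbasis fullv) (linfun (fun y : K => x * y))).

Definition absN (x : K) : R := ratr `|normK x|.

Definition in_DeltaK (a b : K) : Prop :=
  free [:: 1; a; b] /\ 0 < sigma a /\ 0 < sigma b /\ sigma a + sigma b < 1.

Definition ind := ('I_3 * 'I_3)%type.
Definition i0 : 'I_3 := @Ordinal 3 0 erefl.
Definition i1 : 'I_3 := @Ordinal 3 1 erefl.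
Definition i2 : 'I_3 := @Ordinal 3 2 erefl.

Definition vval (r : R) (x y : K) : R :=
  (sigma x `^ r) * (sigma y `^ r) / (absN x * absN y).

(* epsilon(a,b): the ordered pair (i,j) with {i,j} the pair maximizing v and
   (a,b) in the triangle triangle(i,j).  (Ties do not occur on Delta_K.) *)
Definition eps (r : R) (ab : K * K) : ind :=
  let a := ab.1 in let b := ab.2 in let c := 1 - a - b in
  let x := sigma a in let y := sigma b in
  let v12 := vval r a b in let v01 := vval r a c in let v02 := vval r b c in
  if (v01 <= v12) && (v02 <= v12) then
    (if y <= x then (i1, i2) else (i2, i1))
  else if v02 <= v01 then
    (if 2 * x + y - 1 <= 0 then (i0, i1) else (i1, i0))
  else
    (if x + 2 * y - 1 <= 0 then (i0, i2) else (i2, i0)).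

Definition Tmap (e : ind) (ab : K * K) : K * K :=
  let x := ab.1 in let y := ab.2 in
  match (val e.1, val e.2) with
  | (1, 2)%N => ((x - y) / (1 - y), y / (1 - y))
  | (2, 1)%N => (x / (1 - x), (y - x) / (1 - x))
  | (0, 1)%N => (x / (1 - x), y / (1 - x))
  | (1, 0)%N => ((2 * x + y - 1) / (x + y), y / (x + y))
  | (0, 2)%N => (x / (1 - y), y / (1 - y))
  | (2, 0)%N => (x / (x + y), (x + 2 * y - 1) / (x + y))
  | _ => ab
  end.

Definition Tstep (r : R) (ab : K * K) : K * K := Tmap (eps r ab) ab.

Definition eps_seq (r : R) (ab : K * K) (n : nat) : ind :=
  eps r (iter n (Tstep r) ab).

End Defs.

Definition Mmat (e : ind) : 'M[int]_3 :=
  \matrix_(k < 3, l < 3) ((k == l) || ((k == e.1) && (l == e.2)))%:R.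

Definition primitive_mx (n : nat) (A : 'M[int]_n.+1) : Prop :=
  exists k : nat, (0 < k)%N /\ forall i j, 0 < (A ^+ k) i j.

Definition purely_periodic_len {T : Type} (s : nat -> T) (l : nat) : Prop :=
  (0 < l)%N /\ (forall n, s (n + l)%N = s n) /\
  (forall m, (0 < m < l)%N -> ~ (forall n, s (n + m)%N = s n)).

(* Rescale the barycentric coordinates (γ, α, β) along the orbit so that the
   move (i, j) becomes u(i) := u(i) - u(j).  The coordinates stay nonnegative
   and their sum drops by u(j), so a coordinate that is a target once per period
   gets arbitrarily small.  Hence (1) every target is also a source, since a
   coordinate that is never a source is constant and positive; and (2) every
   edge (i, j) leaves the pair {i, j}: otherwise (u(i), u(j)) evolves by
   unimodular integer matrices, the determinant pairing it with its value one
   period later is constant, hence 0, so u(i)/u(j) is a root of an integer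
   quadratic, hence rational in the cubic field, contradicting the freeness of
   1, α, β (the identity matrix is excluded since u(j) would not shrink).  On
   three vertices (1) and (2) make the transition graph of one period reach
   every vertex in at most two steps, so the square of the product matrix is
   positive.  Only the inequality target <= source of the choice ε is used. *)

From HB Require Import structures.
From mathcomp Require Import all_boot all_order all_algebra all_field.
From mathcomp Require Import all_classical all_reals all_analysis.
From mathcomp Require Import ring lra zify.
Import Order.TTheory GRing.Theory Num.Theory.
Local Open Scope ring_scope.

Set Implicit Arguments.
Unset Strict Implicit.
Unset Printing Implicit Defensive.

Lemma nonincreasing_drops_le0 (R : archiRealFieldType) (T : nat -> R) (c : R)
    (n0 l : nat) :
  (0 < l)%N -> (forall n, 0 <= T n) -> (forall n, T n.+1 <= T n) ->
  (forall m, T (n0 + m * l).+1 <= T (n0 + m * l)%N - c) -> c <= 0.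
Proof.
move=> l_gt0 T_ge0 T_decr T_drop; rewrite leNgt; apply/negP => c_gt0.
have T_mono := Order.NatMonotonyTheory.nonincnP T_decr.
have T_lin m : T (n0 + m * l)%N <= T 0%N - m%:R * c.
  elim: m => [|m IH]; first by rewrite mul0n addn0 mul0r subr0 T_mono.
  have -> : (n0 + m.+1 * l = (n0 + m * l).+1 + l.-1)%N by rewrite mulSn; lia.
  apply: le_trans (T_mono _ _ (leq_addr _ _)) _; apply: le_trans (T_drop m) _.
  by rewrite -natr1 mulrDl mul1r; lra.
have := archi_boundP (divr_ge0 (T_ge0 0%N) (ltW c_gt0)).
set m := Num.Def.archi_bound _; rewrite ltr_pdivrMr // => bound_m.
by have := T_lin m; have := T_ge0 (n0 + m * l)%N; lra.
Qed.

Lemma ord3P (v : 'I_3) : [\/ v = i0, v = i1 | v = i2].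
Proof.
by case: v => [[|[|[|//]]] lt_v3]; [constructor 1|constructor 2|constructor 3];
  apply: val_inj.
Qed.

Lemma exists_ord3 (P : pred 'I_3) : [exists w, P w] = [|| P i0, P i1 | P i2].
Proof.
apply/existsP/or3P => [[w]|[] Pw]; [|by exists i0|by exists i1|by exists i2].
by case: (ord3P w) => -> Pw; [constructor 1|constructor 2|constructor 3].
Qed.

Lemma ord3_cases (y : 'I_3) {i j k : 'I_3} :
  i != j -> j != k -> i != k -> [|| y == i, y == j | y == k].
Proof.
by case: (ord3P i) => ->; case: (ord3P j) => ->; case: (ord3P k) => ->;
  case: (ord3P y) => ->.
Qed.

Lemma graph3_reach_le2 (g : rel 'I_3) :
  irreflexive g ->
  (forall u v, g u v -> [exists w, g v w]) ->
  (forall i j k, i != j -> j != k -> i != k -> g i j -> g i k || g j k) ->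
  (exists u v, g u v) ->
  forall x y, x != y -> g x y || [exists w, g x w && g w y].
Proof.
move=> irr out exit [u [v guv]] x y xy.
have out' w : [|| g i0 w, g i1 w | g i2 w] ==> [|| g w i0, g w i1 | g w i2].
  by apply/implyP; case/or3P => /out; rewrite exists_ord3.
have exit' i j k : i != j -> j != k -> i != k -> g i j ==> g i k || g j k.
  by move=> ij jk ik; apply/implyP; apply: exit.
have guv' : [|| g i0 i0, g i0 i1, g i0 i2, g i1 i0, g i1 i1, g i1 i2,
  g i2 i0, g i2 i1 | g i2 i2].
  by case: (ord3P u) guv => ->; case: (ord3P v) => -> ->; rewrite ?orbT.
move: (irr i0) (irr i1) (irr i2) (out' i0) (out' i1) (out' i2) guv'.
move: (exit' i0 i1 i2 isT isT isT) (exit' i0 i2 i1 isT isT isT).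
move: (exit' i1 i0 i2 isT isT isT) (exit' i1 i2 i0 isT isT isT).
move: (exit' i2 i0 i1 isT isT isT) (exit' i2 i1 i0 isT isT isT).
rewrite exists_ord3; move: xy.
case: (ord3P x) => ->; case: (ord3P y) => -> //= _.
all: case: (g i0 i0); case: (g i0 i1); case: (g i0 i2); case: (g i1 i0);
  case: (g i1 i1); case: (g i1 i2); case: (g i2 i0); case: (g i2 i1);
  case: (g i2 i2); by [].
Qed.

Definition period_edge (e : nat -> ind) (l : nat) : rel 'I_3 :=
  fun x y => [exists k : 'I_l, e k == (x, y)].

Lemma mulmx_ge_term {R : numDomainType} {m n p} {A : 'M[R]_(m, n)}
    {B : 'M[R]_(n, p)} i k j :
  (forall a b, 0 <= A a b) -> (forall a b, 0 <= B a b) ->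
  A i k * B k j <= (A *m B) i j.
Proof.
move=> A_ge0 B_ge0; rewrite mxE (bigD1 k) //= lerDl.
by apply: sumr_ge0 => c _; apply: mulr_ge0.
Qed.

Lemma Mmat_ge0 f x y : 0 <= Mmat f x y.
Proof. by rewrite mxE ler0n. Qed.

Lemma prod_Mmat_bounds (e : nat -> ind) n (P := \prod_(k < n) Mmat (e k)) :
  [/\ forall x y, 0 <= P x y, forall x, 1 <= P x x &
      forall k, (k < n)%N -> 1 <= P (e k).1 (e k).2].
Proof.
rewrite {}/P; elim: n => [|n [P_ge0 P_diag P_edge]].
  by rewrite big_ord0; split => [x y|x|//]; rewrite mxE ?ler0n ?eqxx.
rewrite big_ord_recr /= -mulmxE.
set P := \prod_(k < n) _; set M := Mmat (e n).
have M_diag x : M x x = 1 by rewrite mxE eqxx.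
have ge_term x w y : P x w * M w y <= (P *m M) x y.
  exact: mulmx_ge_term P_ge0 (Mmat_ge0 (e n)).
split=> [x y|x|k].
- by rewrite mxE sumr_ge0 // => c _; rewrite mulr_ge0 ?Mmat_ge0.
- by apply: le_trans (ge_term x x x); rewrite M_diag mulr1.
- rewrite ltnS leq_eqVlt => /orP [/eqP ->|lt_kn].
    apply: le_trans (ge_term _ (e n).1 _).
    by rewrite mxE !eqxx orbT mulr1.
  by apply: le_trans (ge_term _ (e k).2 _); rewrite M_diag mulr1 P_edge.
Qed.

Lemma prod_Mmat_primitive (e : nat -> ind) l :
  (forall x y, x != y ->
     period_edge e l x y || [exists w, period_edge e l x w && period_edge e l w y]) ->
  primitive_mx (\prod_(k < l) Mmat (e k)).
Proof.
move=> reach2; have [P_ge0 P_diag P_edge] := prod_Mmat_bounds e l.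
set P := \prod_(k < l) _ in P_ge0 P_diag P_edge *.
have P_gt0 x y : period_edge e l x y -> 0 < P x y.
  case/existsP => k /eqP ek; apply: lt_le_trans ltr01 _.
  by have := P_edge k (ltn_ord k); rewrite ek.
have P_diag_gt0 x : 0 < P x x := lt_le_trans ltr01 (P_diag x).
have ge_term x w y : P x w * P w y <= (P *m P) x y.
  exact: (mulmx_ge_term x w y P_ge0 P_ge0).
exists 2%N; split=> // x y; rewrite expr2 -mulmxE.
have [<-|/reach2 /orP [/P_gt0 Pxy|/existsP [w /andP [/P_gt0 Pxw /P_gt0 Pwy]]]] :=
  eqVneq x y.
- exact: lt_le_trans (mulr_gt0 _ _) (ge_term x x x).
- exact: lt_le_trans (mulr_gt0 Pxy _) (ge_term x y y).
- exact: lt_le_trans (mulr_gt0 Pxw Pwy) (ge_term x w y).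
Qed.

Lemma small_root_odd_dim_rat (K : fieldExtType rat) (P : {poly K}) (t : K) :
  odd (\dim {:K}) -> P \is a polyOver 1%VS -> P != 0 -> (size P <= 3)%N ->
  root P t -> t \in 1%VS.
Proof.
move=> odd_dim P_over P_neq0 P_small P_root.
have deg_lt3 : (adjoin_degree 1%VS t < 3)%N.
  rewrite ltnNge; apply/negP => deg_ge3.
  have := root_small_adjoin_poly P_over (leq_trans P_small deg_ge3).
  by rewrite P_root (negbTE P_neq0).
have := field_dimS (subvf <<1%VS; t>>); rewrite dim_Fadjoin dimv1 muln1.
rewrite -adjoin_deg_eq1; move: odd_dim deg_lt3.
case: (adjoin_degree _ _) => [|[|[|//]]] //= odd_dim _.
- by rewrite dvd0n => /eqP dim0; rewrite dim0 in odd_dim.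
- by move/dvdn_odd/(_ odd_dim).
Qed.

Lemma intr_eq0_fieldExt (K : fieldExtType rat) (c : int) :
  (c%:~R == 0 :> K) = (c == 0).
Proof. by rewrite -(rmorph_int (in_alg K)) fmorph_eq0 intr_eq0. Qed.

Lemma int_quadratic_root_rat (K : fieldExtType rat) (t : K) (c2 c1 c0 : int) :
  odd (\dim {:K}) -> ~~ [&& c2 == 0, c1 == 0 & c0 == 0] ->
  c2%:~R * t ^+ 2 + c1%:~R * t + c0%:~R = 0 -> t \in 1%VS.
Proof.
move=> odd_dim c_neq0 t_root.
pose P : {poly K} := Poly [:: c0%:~R; c1%:~R; c2%:~R].
apply: (@small_root_odd_dim_rat K P) => //.
- apply/polyOverP => i; rewrite coef_Poly.
  by case: i => [|[|[|i]]]; rewrite /= ?rpred_int ?nth_nil ?rpred0.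
- apply: contra c_neq0 => /eqP P0.
  have P_coef i : P`_i = 0 by rewrite P0 coef0.
  move: (P_coef 0%N) (P_coef 1%N) (P_coef 2%N); rewrite !coef_Poly /=.
  by move=> /eqP + /eqP + /eqP; rewrite !intr_eq0_fieldExt => -> -> ->.
- exact: size_Poly.
- by apply/rootP; rewrite !horner_Poly /= mul0r add0r -t_root; ring.
Qed.

(* Index 0 is γ = 1 - α - β, as in the paper. *)
Definition bary {K : pzRingType} (ab : K * K) (k : 'I_3) : K :=
  match val k with 0%N => 1 - ab.1 - ab.2 | 1%N => ab.1 | _ => ab.2 end.

Lemma bary_ratio_irrational (K : fieldExtType rat) (a b : K) (i j : 'I_3) :
  free [:: 1; a; b] -> (forall k, bary (a, b) k != 0) -> i != j ->
  bary (a, b) i / bary (a, b) j \notin 1%VS.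
Proof.
move=> free_ab bary_neq0; wlog lt_ij : i j / (i < j)%N => [wlog_ij ij|_].
  have [/wlog_ij->//|lt_ji|/val_inj eq_ij] := ltngtP i j.
    by rewrite -invf_div rpredV wlog_ij // eq_sym.
  by rewrite eq_ij eqxx in ij.
move: free_ab; rewrite !free_cons span_seq1 /= => /and3P [one_notin a_notin _].
apply/negP => /vlineP [c]; move/(canRL (divfK (bary_neq0 j))); rewrite -scalerAl mul1r.
have spanD x y : x *: a + y *: b \in <<[:: a; b]>>%VS.
  by rewrite memvD ?memvZ ?memv_span ?inE ?eqxx ?orbT.
move: i j lt_ij => [[|[|[|//]]] ?] [[|[|[|//]]] ?] //; rewrite /bary /= => _ def_i.
- by move: one_notin; rewrite (_ : 1 = (c + 1) *: a + 1 *: b) ?spanD //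
    scalerDl !scale1r -def_i; ring.
- by move: one_notin; rewrite (_ : 1 = 1 *: a + (c + 1) *: b) ?spanD //
    scalerDl !scale1r -def_i; ring.
- by move: a_notin; rewrite def_i memvZ ?memv_line.
Qed.

Lemma bary_Tmap {K : fieldExtType rat} (e : ind) (ab : K * K) k :
  e.1 != e.2 -> 1 - bary ab e.2 != 0 ->
  bary (Tmap e ab) k * (1 - bary ab e.2) =
  bary ab k - (if k == e.1 then bary ab e.2 else 0).
Proof.
case: e => [[[|[|[|//]]] ?] [[|[|[|//]]] ?]] // _; case: ab => x y;
  case: k => [[|[|[|//]]] ?]; rewrite /bary /Tmap /eq_op /= => denom_neq0.
all: try by field.
all: by rewrite (_ : x + y = 1 - (1 - x - y)); [field|ring].
Qed.

Section Simplex.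
Variables (K : fieldExtType rat) (R : realType) (sigma : {rmorphism K -> R}).

Definition in_simplex (ab : K * K) := forall k, 0 <= sigma (bary ab k).

Variable r : R.

Lemma eps_neq ab : (eps sigma r ab).1 != (eps sigma r ab).2.
Proof. by rewrite /eps; case: ifP => _; [|case: ifP => _]; case: ifP. Qed.

Lemma eps_target_le_source ab :
  sigma (bary ab (eps sigma r ab).2) <= sigma (bary ab (eps sigma r ab).1).
Proof.
rewrite /eps; case: ifP => _; [|case: ifP => _]; case: ifP => /=;
  rewrite /bary /= ?rmorphB ?rmorph1 => *; lra.
Qed.

Lemma eps_target_lt1 ab : in_simplex ab -> sigma (bary ab (eps sigma r ab).2) < 1.
Proof.
move=> ab_in; move: (ab_in i0) (ab_in i1) (ab_in i2) (eps_target_le_source ab).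
by rewrite /eps; case: ifP => _; [|case: ifP => _]; case: ifP => /=;
  rewrite /bary /= ?rmorphB ?rmorph1 => *; lra.
Qed.

Lemma Tstep_simplex ab : in_simplex ab -> in_simplex (Tstep sigma r ab).
Proof.
move=> ab_in k; set f := eps sigma r ab.
have denom_gt0 : 0 < sigma (1 - bary ab f.2).
  by rewrite rmorphB rmorph1 subr_gt0 eps_target_lt1.
have denom_neq0 : 1 - bary ab f.2 != 0 by rewrite -(fmorph_eq0 sigma) lt0r_neq0.
rewrite /Tstep -/f -(mulfK denom_neq0 (bary _ k)) bary_Tmap ?eps_neq //.
rewrite fmorph_div divr_ge0 ?(ltW denom_gt0) // rmorphB; case: eqP => [->|_] /=.
  by rewrite subr_ge0 eps_target_le_source.
by rewrite rmorph0 subr0 ab_in.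
Qed.

Variables (a b : K).
Hypothesis ab_in : in_simplex (a, b).

Definition orbit n := iter n (Tstep sigma r) (a, b).

Lemma orbit_simplex n : in_simplex (orbit n).
Proof. by elim: n => [|n IH] //=; apply: Tstep_simplex. Qed.

Definition step_denom n := 1 - bary (orbit n) (eps sigma r (orbit n)).2.

Lemma step_denom_gt0 n : 0 < sigma (step_denom n).
Proof.
rewrite /step_denom rmorphB rmorph1 subr_gt0.
exact: eps_target_lt1 (orbit_simplex n).
Qed.

Definition hcoord n k := (\prod_(m < n) step_denom m) * bary (orbit n) k.

Lemma hcoord0 k : hcoord 0 k = bary (a, b) k.
Proof. by rewrite /hcoord big_ord0 mul1r. Qed.

Lemma hcoord_ge0 n k : 0 <= sigma (hcoord n k).
Proof.
rewrite rmorphM rmorph_prod mulr_ge0 ?orbit_simplex //.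
by apply: prodr_ge0 => m _; apply/ltW/step_denom_gt0.
Qed.

Lemma hcoordS n k (f := eps_seq sigma r (a, b) n) :
  hcoord n.+1 k = hcoord n k - (if k == f.1 then hcoord n f.2 else 0).
Proof.
have denom_neq0 : step_denom n != 0.
  by rewrite -(fmorph_eq0 sigma) lt0r_neq0 ?step_denom_gt0.
rewrite /hcoord big_ord_recr /= -/(orbit n) -mulrA (mulrC (step_denom n)).
rewrite bary_Tmap ?eps_neq // /f /eps_seq -/(orbit n).
by case: ifP; rewrite ?subr0 // mulrBr.
Qed.

End Simplex.

Section Dynamics.
Variables (K : fieldExtType rat) (R : realType) (sigma : {rmorphism K -> R}).
Variables (u : nat -> 'I_3 -> K) (e : nat -> ind) (l : nat).
Hypothesis uS :
  forall n k, u n.+1 k = u n k - (if k == (e n).1 then u n (e n).2 else 0).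
Hypothesis u_ge0 : forall n k, 0 <= sigma (u n k).
Hypothesis e_neq : forall n, (e n).1 != (e n).2.
Hypothesis l_gt0 : (0 < l)%N.
Hypothesis e_periodic : forall n, e (n + l)%N = e n.

Lemma e_periodic_mul n m : e (n + m * l)%N = e n.
Proof.
by elim: m => [|m IH]; rewrite ?mul0n ?addn0 // mulSn addnCA addnC e_periodic.
Qed.

Lemma e_mod n : e n = e (n %% l)%N.
Proof. by rewrite {1}(divn_eq n l) addnC e_periodic_mul. Qed.

Lemma u_decr n k : sigma (u n.+1 k) <= sigma (u n k).
Proof.
rewrite uS rmorphB; case: ifP => _; rewrite ?rmorph0 ?subr0 //.
by rewrite lerBlDr lerDl u_ge0.
Qed.

Lemma u_mono k {m n} : (m <= n)%N -> sigma (u n k) <= sigma (u m k).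
Proof. exact: (Order.NatMonotonyTheory.nonincnP (u_decr ^~ k)). Qed.

Definition mass n := \sum_k sigma (u n k).

Lemma massS n : mass n.+1 = mass n - sigma (u n (e n).2).
Proof.
rewrite /mass; under eq_bigr do rewrite uS rmorphB; rewrite sumrB.
congr (_ - _); rewrite (bigD1 (e n).1) //= eqxx big1 ?addr0 // => k /negbTE ->.
exact: rmorph0.
Qed.

(* Otherwise the mass would drop by [d] once per period. *)
Lemma target_lower_bound_le0 n0 j d :
  (e n0).2 = j -> (forall n, d <= sigma (u n j)) -> d <= 0.
Proof.
move=> e_n0 d_le; apply: (@nonincreasing_drops_le0 _ mass _ n0 l) => //.
- by move=> n; apply: sumr_ge0.
- by move=> n; rewrite massS lerBlDr lerDl u_ge0.
- by move=> m; rewrite massS e_periodic_mul e_n0 lerB.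
Qed.

Lemma never_source_const v : (forall n, (e n).1 != v) -> forall n, u n v = u 0 v.
Proof.
by move=> v_src; elim=> [//|n IH]; rewrite uS eq_sym (negbTE (v_src n)) subr0.
Qed.

Lemma never_source_target_le0 v n0 :
  (forall n, (e n).1 != v) -> (e n0).2 = v -> sigma (u 0 v) <= 0.
Proof.
move=> v_src e_n0; apply: (target_lower_bound_le0 e_n0) => n.
by rewrite (never_source_const v_src).
Qed.

Section ClosedPair.
Variables (i j : 'I_3).
Hypothesis ij : i != j.
Hypothesis pair_closed :
  forall n, (e n).1 \in [:: i; j] -> (e n).2 \in [:: i; j].

Definition pair_move (f : ind) (v : K * K) : K * K :=
  if f == (i, j) then (v.1 - v.2, v.2)
  else if f == (j, i) then (v.1, v.2 - v.1) else v.

Definition upair n := (u n i, u n j).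

Lemma upairS n : upair n.+1 = pair_move (e n) (upair n).
Proof.
rewrite /upair /pair_move !uS; move: (e_neq n) (@pair_closed n).
case: (e n) => s t /=; rewrite !inE.
have [-> st | si] := eqVneq s i.
  move=> /(_ isT); rewrite [t == i]eq_sym (negbTE st) => /eqP ->.
  by rewrite eqxx [j == i]eq_sym (negbTE ij) subr0.
have [-> st | sj _ _] := eqVneq s j.
  move=> /(_ (orbT _)); rewrite [t == j]eq_sym (negbTE st) orbF => /eqP ->.
  by rewrite xpair_eqE [j == i]eq_sym (negbTE ij) eqxx subr0.
by rewrite !xpair_eqE (negbTE si) (negbTE sj) !subr0.
Qed.

Definition det2 (v w : K * K) := v.1 * w.2 - v.2 * w.1.

Lemma det2_pair_move f v w : det2 (pair_move f v) (pair_move f w) = det2 v w.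
Proof.
by rewrite /pair_move /det2; case: ifP => _; [|case: ifP => _]; rewrite /=; ring.
Qed.

Lemma det2_upair_period n : det2 (upair n) (upair (n + l)) = det2 (upair 0) (upair l).
Proof.
elim: n => [//|n <-]; rewrite addSn !upairS -(e_periodic n).
exact: det2_pair_move.
Qed.

Lemma upair_int_comb n : exists p q r s : int, p * s - q * r = 1 /\
  u n i = p%:~R * u 0 i + q%:~R * u 0 j /\ u n j = r%:~R * u 0 i + s%:~R * u 0 j.
Proof.
elim: n => [|n [p [q [r [s [det1 [ui uj]]]]]]].
  by exists 1, 0, 0, 1; rewrite /= !(mul1r, mul0r, addr0, add0r).
have := upairS n; rewrite /pair_move; case: ifP => _; [|case: ifP => _]; case=> -> ->.
- exists (p - r), (q - s), r, s; rewrite ui uj !intrB.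
  by split; [rewrite -det1|split]; ring.
- exists p, q, (r - p), (s - q); rewrite ui uj !intrB.
  by split; [rewrite -det1|split]; ring.
- by exists p, q, r, s.
Qed.

Variable n0 : nat.
Hypothesis e_n0 : (e n0).2 = j.
Hypothesis ui_gt0 : 0 < sigma (u 0 i).
Hypothesis uj_gt0 : 0 < sigma (u 0 j).

Lemma det2_period_eq0 : det2 (upair 0) (upair l) = 0.
Proof.
apply/eqP; rewrite -(fmorph_eq0 sigma) -normr_eq0; apply/eqP/le_anti.
rewrite normr_ge0 andbT; set z := `|_|.
suff : z / (2 * sigma (u 0 i)) <= 0 by rewrite pmulr_lle0 // invr_gt0 mulr_gt0.
apply: (target_lower_bound_le0 e_n0) => n.
rewrite ler_pdivrMr ?mulr_gt0 // /z -(det2_upair_period n) /det2 /= rmorphB !rmorphM.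
have ui_le := u_mono i (leq0n n); have ui_le' := u_mono i (leq_addr l n).
have uj_le := u_mono j (leq_addr l n).
have := u_ge0 n i; have := u_ge0 n j; have := u_ge0 (n + l) i.
have := u_ge0 (n + l) j; rewrite /= in ui_le ui_le' uj_le *.
by move=> *; rewrite ler_norml; apply/andP; split; nra.
Qed.

Lemma upair_period_neq : upair l != upair 0.
Proof.
apply/eqP => per_l.
have per n : upair (n + l) = upair n.
  by elim: n => [|n IH]; rewrite ?add0n // addSn !upairS e_periodic IH.
have per_mul m : u (m * l)%N j = u 0 j.
  elim: m => [//|m IH]; rewrite mulSn addnC.
  by move: (per (m * l)%N) => [_ ->].
suff : sigma (u 0 j) <= 0 by rewrite leNgt uj_gt0.
apply: (target_lower_bound_le0 e_n0) => n; rewrite -(per_mul n).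
by apply: u_mono; rewrite leq_pmulr.
Qed.

Lemma closed_pair_ratio_rational : odd (\dim {:K}) -> u 0 i / u 0 j \in 1%VS.
Proof.
move=> odd_dim; have [p [q [r [s [det1 [ui uj]]]]]] := upair_int_comb l.
have uj_neq0 : u 0 j != 0 by rewrite -(fmorph_eq0 sigma) lt0r_neq0.
have := det2_period_eq0; rewrite /det2 /= ui uj => D0.
apply: (@int_quadratic_root_rat _ _ r (s - p) (- q) odd_dim).
  apply/negP => /and3P [/eqP r0 /eqP sp /eqP q0].
  have [{}q0 {}sp] : q = 0 /\ s = p by lia.
  have p_ge0 : 0 <= p.
    rewrite -(ler0z R) -(pmulr_lge0 _ ui_gt0).
    by have := u_ge0 l i; rewrite ui q0 mul0r addr0 rmorphM rmorph_int.
  have p1 : p = 1 by move: det1; rewrite q0 sp mul0r subr0; nia.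
  move/negP: upair_period_neq; apply; apply/eqP.
  by rewrite /upair ui uj p1 q0 r0 sp p1 !(mul1r, mul0r, addr0, add0r).
by rewrite -(mulr0 ((u 0 j)^-2)) -D0 !intrB intrN; field.
Qed.

End ClosedPair.

Hypothesis odd_dim : odd (\dim {:K}).
Hypothesis u0_gt0 : forall k, 0 < sigma (u 0 k).
Hypothesis u0_ratio : forall i j, i != j -> u 0 i / u 0 j \notin 1%VS.

Local Notation edge := (period_edge e l).

Lemma period_edgeP x y : reflect (exists n, e n = (x, y)) (edge x y).
Proof.
apply: (iffP existsP) => [[k /eqP ek]|[n en]]; first by exists k.
by exists (Ordinal (ltn_pmod n l_gt0)); rewrite /= -e_mod en.
Qed.

Lemma edge_target_source x y : edge x y -> [exists w, edge y w].
Proof.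
case/period_edgeP => n0 en0; apply: contraT => /existsPn no_out.
suff : sigma (u 0 y) <= 0 by rewrite leNgt u0_gt0.
apply: (@never_source_target_le0 _ n0) => [n|]; last by rewrite en0.
apply/eqP => e_src; move/negP: (no_out (e n).2); apply; apply/period_edgeP.
by exists n; rewrite -e_src; case: (e n).
Qed.

Lemma edge_leaves_pair i j k : i != j -> j != k -> i != k ->
  edge i j -> edge i k || edge j k.
Proof.
move=> ij jk ik /period_edgeP [n0 en0]; apply: contraT.
rewrite negb_or => /andP [/negP no_ik /negP no_jk].
suff : u 0 i / u 0 j \in 1%VS by rewrite (negbTE (u0_ratio ij)).
have e_n0 : (e n0).2 = j by rewrite en0.
apply: (closed_pair_ratio_rational ij _ e_n0) => //.
- move=> n src; rewrite !inE.
  have /or3P [-> | -> | /eqP tgt] := ord3_cases (e n).2 ij jk ik; rewrite ?orbT //.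
  exfalso; move: src; rewrite !inE => /orP [/eqP src | /eqP src];
    [apply: no_ik | apply: no_jk];
    by apply/period_edgeP; exists n; rewrite -src -tgt; case: (e n).
Qed.

Lemma period_edge_reach_le2 x y :
  x != y -> edge x y || [exists w, edge x w && edge w y].
Proof.
apply: graph3_reach_le2.
- move=> v; apply/negbTE/negP => /period_edgeP [n en].
  by have := e_neq n; rewrite en eqxx.
- exact: edge_target_source.
- exact: edge_leaves_pair.
- by exists (e 0).1, (e 0).2; apply/period_edgeP; exists 0%N; case: (e 0).
Qed.

End Dynamics.

Theorem theorem3p7 (K : fieldExtType rat) (R : realType)
  (sigma : {rmorphism K -> R}) (hdim : \dim {:K} = 3%N)
  (p q : nat) (hp : (0 < p)%N) (hq : (0 < q)%N) (hcop : coprime p q)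
  (h3 : ~~ (3 %| p)%N)
  (a b : K) (hab : in_DeltaK sigma a b) (l : nat)
  (hper : purely_periodic_len
            (eps_seq sigma ((p%:R : R) / (q%:R : R)) (a, b)) l) :
  primitive_mx (\prod_(k < l) Mmat (eps_seq sigma ((p%:R : R) / (q%:R : R)) (a, b) k)).
Proof.
set r := (p%:R : R) / (q%:R : R) in hper *.
case: hper => l_gt0 [e_periodic _]; case: hab => ab_free [a_gt0 [b_gt0 ab_lt1]].
have bary_gt0 k : 0 < sigma (bary (a, b) k).
  by case: k => [[|[|[|//]]] ?]; rewrite /bary /= ?rmorphB ?rmorph1 //; lra.
have ab_in : in_simplex sigma (a, b) by move=> k; apply/ltW.
apply/prod_Mmat_primitive/(period_edge_reach_le2 (u := hcoord sigma r a b)) => //.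
- exact: hcoordS.
- exact: hcoord_ge0.
- by move=> n; apply: eps_neq.
- by rewrite hdim.
- by move=> k; rewrite hcoord0.
- move=> i j ij; rewrite !hcoord0 bary_ratio_irrational // => k.
  by rewrite -(fmorph_eq0 sigma) lt0r_neq0.
Qed.
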